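(* Let $H_1^+$, $H_2^+$ be positive half-spaces in $\tilde K_b(\mathcal P,w)$ with minimal vertices $\Delta_1=\min(H_1)$ and $\Delta_2=\min(H_2)$. Then (1) $H_2^+\le H_1^+$ if and only if $\Delta_2\le\Delta_1$; (2) $H_1^+\cap H_2^+\neq\emptyset$ if and only if $\{\Delta_1,\Delta_2\}$ has an upper bound among the vertices of $\tilde K_b(\mathcal P,w)$.
   Context: $\mathcal P=\langle\Sigma\mid\mathcal R\rangle$ is a semigroup presentation (no relations $(u,u)$), $w\in\Sigma^+$. Pictures over $\mathcal P$: a frame, transistors and $\Sigma$-labelled wires, each wire from the bottom of a transistor or top of the frame to the top of a transistor or bottom of the frame, contacts ordered left to right, the relation ''$T_1<T_2$ if a wire runs from the bottom of $T_1$ to the top of $T_2$'' generating a strict partial order, and each transistor's top and bottom words forming a relation of $\mathcal R$. Dipoles: pairs $T_1<T_2$ with bottom contacts of $T_1$ joined in order to top contacts of $T_2$ and top label of $T_1$ equal to bottom label of $T_2$; reduced = dipole-free. $\tilde K_b(\mathcal P,w)$: vertices are reduced $(w,* )$-pictures modulo concatenation on the bottom with transistor-free pictures; $n$-cubes are such pictures with $n$ maximal transistors marked white, with vertices obtained by keeping/deleting (with their bottom wires) the white transistors; it is a CAT(0) cubical complex; base vertex $*$ = picture without transistors. Vertices: $\Delta_1\le\Delta_2$ iff $\Delta_1\circ\theta\cong\Delta_2$ without reduction for some picture $\theta$. Hyperplanes: classes of edges under the transitive closure of ''opposite sides of a square''; $H^+$ is the component of the complement of $H$ not containing $*$; $H_1^+\le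 H_2^+$ iff $H_2^+\subseteq H_1^+$. The minimal vertex $\min(H)$: for an edge of $H$ given by a picture with one white transistor $T$, the picture formed by all transistors $T'\le T$; independent of the edge. *)

(* Braided pictures (Farley's "pictures") over a
   semigroup presentation, encoded combinatorially, and the CAT(0) cube complex
   K~_b(P,w) described through its vertices, edges, squares and hyperplanes. *)
From Stdlib Require Import Relations.
From mathcomp Require Import all_boot.
Set Implicit Arguments. Unset Strict Implicit. Unset Printing Implicit Defensive.

Section Pictures.
Variable S : Type.
Variable R : seq S -> seq S -> Prop.
Variable w : seq S.

(* A contact: (None, k) = k-th contact of the frame (top frame for sources,
   bottom frame for targets); (Some i, k) = k-th contact of transistor i
   (bottom contact for sources, top contact for targets). *)
Definition contact := (option nat * nat)%type.

(* A picture: top and bottom frame words, transistors 0..ntr-1 with top and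
   bottom labels, and the wiring function (sources -> targets).  Values of
   tlab/blab/wire outside the valid ranges are irrelevant junk. *)
Record picture := Pic {
  topw : seq S; botw : seq S; ntr : nat;
  tlab : nat -> seq S; blab : nat -> seq S;
  wire : contact -> contact }.

Definition src_ok (p : picture) (c : contact) : bool :=
  match c with
  | (None, k) => k < size (topw p)
  | (Some i, k) => (i < ntr p) && (k < size (blab p i)) end.
Definition tgt_ok (p : picture) (c : contact) : bool :=
  match c with
  | (None, k) => k < size (botw p)
  | (Some i, k) => (i < ntr p) && (k < size (tlab p i)) end.
Definition src_lab (p : picture) (c : contact) : option S :=
  match c with (None, k) => onth (topw p) k | (Some i, k) => onth (blab p i) k end.
Definition tgt_lab (p : picture) (c : contact) : option S :=
  match c with (None, k) => onth (botw p) k | (Some i, k) => onth (tlab p i) k end.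

(* T1 -> T2 : a wire runs from the bottom of T1 to the top of T2 *)
Definition tedge (p : picture) (i j : nat) : Prop :=
  i < ntr p /\ j < ntr p /\
  exists k k', src_ok p (Some i, k) /\ wire p (Some i, k) = (Some j, k').
Definition tlt (p : picture) := clos_trans nat (tedge p).
Definition tle (p : picture) (i j : nat) := i = j \/ tlt p i j.

Definition wf (p : picture) : Prop :=
  (forall i, i < ntr p -> R (tlab p i) (blab p i) \/ R (blab p i) (tlab p i)) /\
  (forall c, src_ok p c -> tgt_ok p (wire p c) /\ tgt_lab p (wire p c) = src_lab p c) /\
  (forall c c', src_ok p c -> src_ok p c' -> wire p c = wire p c' -> c = c') /\
  (forall d, tgt_ok p d -> exists c, src_ok p c /\ wire p c = d) /\
  (forall i, i < ntr p -> ~ tlt p i i).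

Definition maximal (p : picture) (i : nat) : Prop :=
  i < ntr p /\ forall j, ~ tedge p i j.

Definition dipole (p : picture) (i j : nat) : Prop :=
  tedge p i j /\ size (blab p i) = size (tlab p j) /\
  (forall k, k < size (blab p i) -> wire p (Some i, k) = (Some j, k)) /\
  tlab p i = blab p j.
Definition reduced (p : picture) : Prop := forall i j, ~ dipole p i j.

Definition mapc (phi : nat -> nat) (c : contact) : contact :=
  match c with (Some j, k) => (Some (phi j), k) | d => d end.

(* q is (isomorphic to) the sub-picture of p formed by the transistors in the
   (downward closed) set Sp, with all wires leaving Sp going to the bottom of
   the frame (in any order, i.e. up to concatenation on the bottom with a
   transistor-free picture); phi identifies transistors of q with those of p. *)
Definition restr_via (p : picture) (Sp : nat -> Prop) (q : picture)
    (phi : nat -> nat) : Prop :=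
  wf q /\ topw q = topw p /\
  (forall j, j < ntr q -> phi j < ntr p /\ Sp (phi j)) /\
  (forall j j', j < ntr q -> j' < ntr q -> phi j = phi j' -> j = j') /\
  (forall i, i < ntr p -> Sp i -> exists j, j < ntr q /\ phi j = i) /\
  (forall j, j < ntr q -> tlab q j = tlab p (phi j) /\ blab q j = blab p (phi j)) /\
  (forall c, src_ok q c ->
     match wire q c with
     | (Some j, k) => wire p (mapc phi c) = (Some (phi j), k)
     | (None, _) => forall i k, wire p (mapc phi c) = (Some i, k) -> ~ Sp i
     end).

(* equality of vertices: isomorphism up to concatenation on the bottom with a
   transistor-free (braided) picture *)
Definition vequiv (p q : picture) : Prop :=
  exists phi, restr_via p (fun _ => True) q phi.

(* concatenation p o th (th glued below p; needs topw th = botw p) *)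
Definition shiftc (n : nat) (c : contact) : contact :=
  match c with (Some j, k) => (Some (j + n), k) | d => d end.
Definition concat (p th : picture) : picture :=
  let through d := match d with
                   | (None, m) => shiftc (ntr p) (wire th (None, m))
                   | d => d end in
  Pic (topw p) (botw th) (ntr p + ntr th)
    (fun i => if i < ntr p then tlab p i else tlab th (i - ntr p))
    (fun i => if i < ntr p then blab p i else blab th (i - ntr p))
    (fun c => match c with
              | (Some i, k) => if i < ntr p then through (wire p c)
                               else shiftc (ntr p) (wire th (Some (i - ntr p), k))
              | (None, k) => through (wire p c) end).

Definition le_v (p q : picture) : Prop :=
  exists th, wf th /\ topw th = botw p /\ vequiv (concat p th) q.

(* vertices of K~_b(P,w): reduced (w, _)-pictures *)
Definition is_vertex (p : picture) : Prop := wf p /\ topw p = w /\ reduced p.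
Definition is_star (p : picture) : Prop := wf p /\ topw p = w /\ ntr p = 0.

(* edges: pictures with one (maximal) white transistor *)
Definition medge := (picture * nat)%type.
Definition is_edge (e : medge) : Prop := is_vertex e.1 /\ maximal e.1 e.2.
(* the other endpoint of the edge: delete the white transistor *)
Definition del (e : medge) (q : picture) : Prop :=
  exists phi, restr_via e.1 (fun i => i <> e.2) q phi.
Definition edge_eq (e e' : medge) : Prop :=
  exists phi, restr_via e.1 (fun _ => True) e'.1 phi /\ phi e'.2 = e.2.
(* opposite sides of a square (the square = e.1 with white e.2 and t2) *)
Definition opp (e e' : medge) : Prop :=
  exists t2, maximal e.1 t2 /\ t2 <> e.2 /\
  exists phi, restr_via e.1 (fun i => i <> t2) e'.1 phi /\ phi e'.2 = e.2.
Definition hrel (e e' : medge) : Prop :=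
  is_edge e /\ is_edge e' /\ (edge_eq e e' \/ opp e e').
(* the hyperplane dual to e, as its set of edges *)
Definition hyperplane (e : medge) : medge -> Prop :=
  fun e' => is_edge e' /\ clos_refl_sym_trans medge hrel e e'.

Definition adj_avoid (H : medge -> Prop) (v v' : picture) : Prop :=
  is_vertex v /\ is_vertex v' /\
  exists e, is_edge e /\ ~ H e /\
   ((vequiv e.1 v /\ del e v') \/ (vequiv e.1 v' /\ del e v)).
(* vertices of the component of the complement of H containing * *)
Definition neg_half (H : medge -> Prop) (v : picture) : Prop :=
  exists s, is_star s /\ clos_refl_trans picture (adj_avoid H) s v.
Definition pos_half (H : medge -> Prop) (v : picture) : Prop :=
  is_vertex v /\ ~ neg_half H v.

(* q represents min(H) for the hyperplane H dual to e *)
Definition is_min (e : medge) (q : picture) : Prop :=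
  exists phi, restr_via e.1 (fun i => tle e.1 i e.2) q phi.

End Pictures.

(* Let D = min(H) for the hyperplane H dual to an edge with white transistor
   t, i.e. the transistors below t.  The proof rests on one characterisation:
   a vertex v lies in H^+ iff D is (up to isomorphism) the restriction of v to
   a down-closed set of transistors.  This is equivalent to D <= v, since v is
   then D followed by the picture formed by the remaining transistors.

   For the characterisation, the edges of H are exactly those whose white
   transistor has down-set D: this is preserved by the two moves generating H,
   and deleting maximal transistors not below the white one joins any such
   edge to (D, t) inside H.  Hence crossing an edge outside H keeps a copy of
   D, which * does not contain, while a vertex without a copy of D reaches *
   by deleting maximal transistors, never crossing H.  Part (1) then follows
   by testing the inclusion on the vertex min(H_1) of H_1^+, and part (2) by
   taking a common vertex of both half-spaces as the upper bound. *)

From Stdlib Require Import Relations.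
From mathcomp Require Import all_boot boolp.
Set Implicit Arguments. Unset Strict Implicit. Unset Printing Implicit Defensive.

Section Pictures.
Variables (S : Type) (R : seq S -> seq S -> Prop).
Local Notation pic := (picture S).

Definition down_closed (p : pic) (D : nat -> Prop) := forall a b, tedge p a b -> D b -> D a.

Lemma mapc_comp f g c : mapc f (mapc g c) = mapc (fun x => f (g x)) c.
Proof. by case: c => [[i|] k]. Qed.

Lemma mapc_id c : mapc id c = c.
Proof. by case: c => [[i|] k]. Qed.

(* A left inverse of [f] on [0, n); it returns [n] outside the image. *)
Definition inv_on (f : nat -> nat) n i := index i (map f (iota 0 n)).

Lemma inv_onP f n i : (exists j, j < n /\ f j = i) -> inv_on f n i < n /\ f (inv_on f n i) = i.
Proof.
move=> [j [jn <-]].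
have fj : f j \in map f (iota 0 n) by apply: map_f; rewrite mem_iota.
have lt : inv_on f n (f j) < n by move: fj; rewrite -index_mem size_map size_iota.
split=> //; have := nth_index 0 fj.
by rewrite (nth_map 0) ?size_iota // nth_iota.
Qed.

Lemma inv_onK f n j : (forall a b, a < n -> b < n -> f a = f b -> a = b) ->
  j < n -> inv_on f n (f j) = j.
Proof.
move=> f_inj jn; have [lt E] := @inv_onP f n (f j) (ex_intro _ j (conj jn erefl)).
exact: f_inj.
Qed.

Lemma wf_tgt (p : pic) c : wf R p -> src_ok p c -> tgt_ok p (wire p c).
Proof. by move=> [_ [H _]] /H []. Qed.

Lemma wf_tgt_ntr (p : pic) c j k : wf R p -> src_ok p c -> wire p c = (Some j, k) -> j < ntr p.
Proof. by move=> wfp pc E; have := wf_tgt wfp pc; rewrite E /= => /andP []. Qed.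

(** * Restrictions *)

Section Restriction.
Variables (p q : pic) (Sp : nat -> Prop) (phi : nat -> nat).
Hypothesis pq : restr_via R p Sp q phi.

Lemma rv_wf : wf R q. Proof. by case: pq. Qed.
Lemma rv_top : topw q = topw p. Proof. by case: pq => _ []. Qed.
Lemma rv_rng j : j < ntr q -> phi j < ntr p /\ Sp (phi j).
Proof. by case: pq => _ [_ []] H _; apply: H. Qed.
Lemma rv_inj j j' : j < ntr q -> j' < ntr q -> phi j = phi j' -> j = j'.
Proof. by case: pq => _ [_ [_ []]] H _; apply: H. Qed.
Lemma rv_sur i : i < ntr p -> Sp i -> exists j, j < ntr q /\ phi j = i.
Proof. by case: pq => _ [_ [_ [_ []]]] H _; apply: H. Qed.
Lemma rv_lab j : j < ntr q -> tlab q j = tlab p (phi j) /\ blab q j = blab p (phi j).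
Proof. by case: pq => _ [_ [_ [_ [_ []]]]] H _; apply: H. Qed.
Lemma rv_wire c : src_ok q c ->
  match wire q c with
  | (Some j, k) => wire p (mapc phi c) = (Some (phi j), k)
  | (None, _) => forall i k, wire p (mapc phi c) = (Some i, k) -> ~ Sp i
  end.
Proof. by case: pq => _ [_ [_ [_ [_ [_ H]]]]]; apply: H. Qed.

Lemma rv_src c : src_ok q c -> src_ok p (mapc phi c).
Proof.
case: c => [[j|] k] /=; last by rewrite rv_top.
by move=> /andP [jq kq]; have [-> _] := rv_rng jq; rewrite -(rv_lab jq).2.
Qed.

Lemma rv_src_lab c : src_ok q c -> src_lab p (mapc phi c) = src_lab q c.
Proof.
case: c => [[j|] k] /=; last by rewrite rv_top.
by move=> /andP [jq kq]; rewrite (rv_lab jq).2.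
Qed.

Lemma rv_inv i : i < ntr p -> Sp i ->
  inv_on phi (ntr q) i < ntr q /\ phi (inv_on phi (ntr q) i) = i.
Proof. by move=> ip Si; apply: inv_onP; apply: rv_sur. Qed.

Lemma rv_invK j : j < ntr q -> inv_on phi (ntr q) (phi j) = j.
Proof. by apply: inv_onK => a b; apply: rv_inj. Qed.

Lemma rv_ntr_lt i : i < ntr p -> ~ Sp i -> ntr q < ntr p.
Proof.
move=> ip nSi; rewrite -[ntr q](size_iota 0) -(size_map phi) -[ntr p](size_iota 0).
apply: (@uniq_leq_size _ (i :: _)) => [|x].
- rewrite /= map_inj_in_uniq ?iota_uniq ?andbT.
    by apply/mapP=> [[j]]; rewrite mem_iota => jq E; apply: nSi; rewrite E; apply: (rv_rng jq).2.
  by move=> a b; rewrite !mem_iota; apply: rv_inj.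
- rewrite in_cons mem_iota => /orP [/eqP -> //|/mapP [j]].
  by rewrite mem_iota => jq ->; apply: (rv_rng jq).1.
Qed.

Lemma rv_tedge i j : tedge q i j -> tedge p (phi i) (phi j).
Proof.
move=> [iq [jq [k [k' [ik E]]]]].
split; first exact: (rv_rng iq).1.
split; first exact: (rv_rng jq).1.
by exists k, k'; split; [exact: rv_src ik | have := rv_wire ik; rewrite E].
Qed.

Lemma rv_tedge_back i j : i < ntr q -> j < ntr q -> tedge p (phi i) (phi j) -> tedge q i j.
Proof.
move=> iq jq [_ [_ [k [k' [ik E]]]]].
have ikq : src_ok q (Some i, k) by move: ik => /= /andP [_]; rewrite iq (rv_lab iq).2.
have := rv_wire ikq; case Eq: (wire q (Some i, k)) => [[j'|] k''] /=; last first.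
  by move=> /(_ _ _ E); case; apply: (rv_rng jq).2.
rewrite E => -[/(rv_inj jq (wf_tgt_ntr rv_wf ikq Eq)) -> _].
by split=> //; split; [exact: wf_tgt_ntr rv_wf ikq Eq | exists k, k''].
Qed.

Lemma rv_tlt i j : tlt q i j -> tlt p (phi i) (phi j).
Proof.
elim=> [a b /rv_tedge|a b c _ ab _ bc]; first exact: t_step.
exact: t_trans ab bc.
Qed.

Lemma rv_tle i j : tle q i j -> tle p (phi i) (phi j).
Proof. by case=> [->|/rv_tlt]; [left|right]. Qed.

Lemma rv_reduced : reduced p -> reduced q.
Proof.
move=> red i j [ij [sz [Ew El]]]; have [iq [jq _]] := ij.
apply: (red (phi i) (phi j)); split; first exact: rv_tedge.
rewrite -(rv_lab iq).2 -(rv_lab jq).1 -(rv_lab iq).1 -(rv_lab jq).2.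
split=> //; split=> // k kb.
have ikq : src_ok q (Some i, k) by rewrite /= iq.
by have := rv_wire ikq; rewrite Ew.
Qed.

Lemma rv_maximal t : t < ntr q -> maximal p (phi t) -> maximal q t.
Proof. by move=> tq [_ H]; split=> // j /rv_tedge /H. Qed.

Lemma rv_down_closed D : down_closed p D -> down_closed q (fun j => D (phi j)).
Proof. by move=> Dp a b /rv_tedge; apply: Dp. Qed.

Hypothesis Sp_closed : down_closed p Sp.

Lemma rv_tlt_back i j : i < ntr q -> j < ntr q -> tlt p (phi i) (phi j) -> tlt q i j.
Proof.
move=> iq jq ij; have {ij} := clos_trans_tn1 _ _ _ _ ij.
suff: forall b, clos_trans_n1 nat (tedge p) (phi i) b ->
    forall j, j < ntr q -> b = phi j -> tlt q i j by move/[apply]; apply.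
move=> b; elim=> [y iy|y z yz _ IH] {}j {}jq Ez; subst.
  by apply: t_step; apply: rv_tedge_back.
have [yp _] := yz; have [j' [j'q Ej']] := rv_sur yp (Sp_closed yz (rv_rng jq).2).
apply: t_trans (IH _ j'q (esym Ej')) (t_step _ _ _ _ _).
by apply: rv_tedge_back; rewrite ?Ej'.
Qed.

Lemma rv_tle_back i j : i < ntr q -> j < ntr q -> tle p (phi i) (phi j) -> tle q i j.
Proof. by move=> iq jq [/(rv_inj iq jq)|/(rv_tlt_back iq jq)]; [left|right]. Qed.

End Restriction.

Ltac split_restr := refine (conj _ (conj _ (conj _ (conj _ (conj _ (conj _ _)))))).

Lemma rv_comp (p q r : pic) S1 S2 phi psi :
  restr_via R p S1 q phi -> restr_via R q S2 r psi ->
  restr_via R p (fun i => exists j, j < ntr q /\ phi j = i /\ S2 j) r (fun k => phi (psi k)).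
Proof.
move=> pq qr; split_restr.
- exact: rv_wf qr.
- by rewrite (rv_top qr) (rv_top pq).
- move=> j jr; have [jq S2j] := rv_rng qr jr.
  by split; [exact: (rv_rng pq jq).1 | exists (psi j)].
- move=> a b ar br E; apply: (rv_inj qr ar br); apply: (rv_inj pq) E.
  + exact: (rv_rng qr ar).1.
  + exact: (rv_rng qr br).1.
- move=> i ip [j [jq [<- S2j]]]; have [k [kr <-]] := rv_sur qr jq S2j.
  by exists k.
- move=> j jr; have jq := (rv_rng qr jr).1.
  by rewrite (rv_lab qr jr).1 (rv_lab qr jr).2 (rv_lab pq jq).1 (rv_lab pq jq).2.
- move=> c rc; have qc := rv_src qr rc.
  have := rv_wire qr rc; have := rv_wire pq qc; rewrite mapc_comp.
  case: (wire r c) => [[j|] k] Wp Wq; first by rewrite Wq in Wp.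
  move=> i k0 E [j [jq [Ej S2j]]].
  case Eq: (wire q (mapc psi c)) Wp Wq => [[j'|] k'] Wp Wq.
  + rewrite Wp in E; case: E => Ei _.
    have Ej' : j' = j by apply: (rv_inj pq (wf_tgt_ntr (rv_wf pq) qc Eq) jq); rewrite Ej Ei.
    by subst; apply: (Wq j k').
  + by apply: (Wp _ _ E); rewrite -Ej; apply: (rv_rng pq jq).2.
Qed.

Lemma rv_factor (p q r : pic) S1 S2 phi psi :
  restr_via R p S1 q phi -> restr_via R p S2 r psi ->
  (forall i, i < ntr p -> S2 i -> S1 i) ->
  restr_via R q (fun j => S2 (phi j)) r (fun k => inv_on phi (ntr q) (psi k)).
Proof.
move=> pq pr S21.
have K k : k < ntr r ->
    inv_on phi (ntr q) (psi k) < ntr q /\ phi (inv_on phi (ntr q) (psi k)) = psi k.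
  by move=> kr; have [kp S2k] := rv_rng pr kr; exact: (rv_inv pq kp (S21 _ kp S2k)).
set phi' := inv_on phi (ntr q) in K *.
split_restr.
- exact: rv_wf pr.
- by rewrite (rv_top pr) (rv_top pq).
- by move=> j jr; have [K1 K2] := K j jr; rewrite K2; split=> //; exact: (rv_rng pr jr).2.
- by move=> a b ar br E; apply: (rv_inj pr ar br); rewrite -(K a ar).2 -(K b br).2 E.
- move=> j jq S2j; have [jp _] := rv_rng pq jq.
  have [k [kr Ek]] := rv_sur pr jp S2j; exists k; split=> //.
  by rewrite /phi' Ek (rv_invK pq jq).
- move=> j jr; have [K1 K2] := K j jr.
  by rewrite (rv_lab pr jr).1 (rv_lab pr jr).2 (rv_lab pq K1).1 (rv_lab pq K1).2 K2.
- move=> c rc.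
  set c1 := mapc (fun k => phi' (psi k)) c.
  have [qc1 Ec1] : src_ok q c1 /\ mapc phi c1 = mapc psi c.
    case: c rc @c1 => [[k0|] k] /=; last by rewrite (rv_top pr) (rv_top pq).
    move=> /andP [k0r kb]; have [K1 K2] := K k0 k0r.
    by rewrite K1 K2 (rv_lab pq K1).2 K2 -(rv_lab pr k0r).2 kb.
  have := rv_wire pr rc; have := rv_wire pq qc1; rewrite Ec1.
  case Er: (wire r c) => [[j|] k] Wp Wr.
  + have jr := wf_tgt_ntr (rv_wf pr) rc Er.
    case Eq: (wire q c1) Wp => [[j'|] k'] Wp.
    * rewrite Wr in Wp; case: Wp => Ej <-.
      by rewrite /phi' Ej (rv_invK pq (wf_tgt_ntr (rv_wf pq) qc1 Eq)).
    * by case: (Wp _ _ Wr); apply: S21; [exact: (rv_rng pr jr).1 | exact: (rv_rng pr jr).2].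
  + move=> i k0; case: (wire q c1) Wp => [[j'|] k'] Wp // [<- _].
    exact: Wr Wp.
Qed.

Lemma rv_ext (p q : pic) Sp Sp' phi : wf R p -> (forall i, i < ntr p -> (Sp i <-> Sp' i)) ->
  restr_via R p Sp q phi -> restr_via R p Sp' q phi.
Proof.
move=> wfp SS' pq; split_restr.
- exact: rv_wf pq.
- exact: rv_top pq.
- by move=> j jq; have [jp Sj] := rv_rng pq jq; split=> //; apply/SS'.
- exact: rv_inj pq.
- by move=> i ip /(SS' _ ip); exact: (rv_sur pq ip).
- exact: rv_lab pq.
- move=> c qc; have := rv_wire pq qc.
  case: (wire q c) => [[j|] k] // W i k0 E.
  by move=> /(SS' _ (wf_tgt_ntr wfp (rv_src pq qc) E)); apply: W E.
Qed.

Lemma rv_id (p : pic) : wf R p -> restr_via R p (fun _ => True) p id.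
Proof.
move=> wfp; split_restr => //.
- by move=> i ip _; exists i.
- by move=> c _; rewrite mapc_id; case: (wire p c) => [[j|] k].
Qed.

Lemma tle_down_closed (p : pic) t : down_closed p (fun i => tle p i t).
Proof.
move=> a b ab [<-|bt]; first by right; apply: t_step.
by right; apply: t_trans (t_step _ _ _ _ ab) bt.
Qed.

Lemma down_closed_tlt (p : pic) D a b : down_closed p D -> tlt p a b -> D b -> D a.
Proof.
move=> Dp; elim=> [x y xy|x y z _ xy _ yz]; first exact: Dp.
by move=> /yz /xy.
Qed.

Lemma maximal_down_closed (p : pic) t : maximal p t -> down_closed p (fun i => i <> t).
Proof. by move=> [_ tmax] a b ab _ E; subst; apply: (tmax b). Qed.

Lemma maximal_tlt (p : pic) t b : maximal p t -> ~ tlt p t b.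
Proof.
move=> [_ tmax] tb; have := clos_trans_t1n _ _ _ _ tb.
by case=> [y|y z] /tmax.
Qed.

Lemma count_lt_subpred (T : eqType) (a b : pred T) s x :
  subpred a b -> x \in s -> b x -> ~~ a x -> count a s < count b s.
Proof.
move=> ab; elim: s => //= y s IH; rewrite in_cons => /orP [/eqP <-|xs] bx nax.
  by rewrite bx (negbTE nax) add0n add1n ltnS sub_count.
rewrite -addnS leq_add ?IH //.
by case ay: (a y); rewrite // (ab _ ay).
Qed.

(* Following wires from [i] must stop, since the number of transistors above the
   current one decreases strictly along an edge. *)
Lemma exists_maximal (p : pic) (Q : nat -> Prop) : wf R p ->
  (forall a b, tedge p a b -> Q a -> Q b) ->
  forall i, i < ntr p -> Q i -> exists t, maximal p t /\ Q t.
Proof.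
move=> wfp Qup.
pose above i := count (fun k => `[< tlt p i k >]) (iota 0 (ntr p)).
suff: forall n i, above i < n -> i < ntr p -> Q i -> exists t, maximal p t /\ Q t.
  by move=> H i; apply: (H (above i).+1).
elim=> // n IH i lt_in ip Qi.
have [[j ij]|nomax] := EM (exists j, tedge p i j); last first.
  by exists i; split=> //; split=> // j ij; apply: nomax; exists j.
have [_ [jp _]] := ij; apply: (IH j) (Qup _ _ ij Qi) => //.
apply: (@leq_trans (above i)); last exact: lt_in.
apply: (@count_lt_subpred _ _ _ _ j).
- by move=> k /asboolP jk; apply/asboolP; exact: t_trans (t_step _ _ _ _ ij) jk.
- by rewrite mem_iota.
- exact/asboolP/t_step.
- by apply/asboolP; exact: (proj2 (proj2 (proj2 (proj2 wfp)))) j jp.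
Qed.

(** * Sub-pictures *)

Lemma pmap_total (A : eqType) (B : Type) (f : A -> option B) (s : seq A) :
  (forall x, x \in s -> f x <> None) ->
  size (pmap f s) = size s /\ forall i x0, i < size s -> onth (pmap f s) i = f (nth x0 s i).
Proof.
elim: s => //= x s IH fs.
have {IH} [IH1 IH2] : size (pmap f s) = size s /\
    forall i x0, i < size s -> onth (pmap f s) i = f (nth x0 s i).
  by apply: IH => y ys; apply: fs; rewrite in_cons ys orbT.
case fx: (f x) => [y|]; last by have := fs x (mem_head _ _); rewrite fx.
split=> [|[|i] x0 //= ?]; first by rewrite /= IH1.
exact: IH2.
Qed.

Lemma onth_ok (T : Type) (s : seq T) k : k < size s -> onth s k <> None.
Proof. by move=> ks E; move: (onthTE s k); rewrite E ks. Qed.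

Lemma src_lab_ok (p : pic) c : src_ok p c -> src_lab p c <> None.
Proof. by case: c => [[i|] k] /=; [move=> /andP [_] | ]; apply: onth_ok. Qed.

Definition sources (m n : nat) (bl : nat -> seq S) : seq contact :=
  [seq (None, k) | k <- iota 0 m] ++
  [seq (Some j, k) | j <- iota 0 n, k <- iota 0 (size (bl j))].

Lemma mem_sources m n bl c : (c \in sources m n bl) =
  if c is (Some j, k) then (j < n) && (k < size (bl j)) else c.2 < m.
Proof.
rewrite mem_cat; case: c => [[j|] k] /=.
- have -> : ((Some j, k) \in [seq (None, k) | k <- iota 0 m]) = false by apply/mapP=> -[].
  apply/allpairsPdep/andP => [[j' [k' []]]|[jn kb]].
    by move=> /= jn kb [-> ->]; move: jn kb; rewrite !mem_iota.
  by exists j, k; rewrite /= !mem_iota jn kb.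
- have -> : ((None, k) \in [seq (Some j, k) | j <- iota 0 n, k <- iota 0 (size (bl j))]) = false.
    by apply/allpairsPdep=> -[? [? []]].
  rewrite orbF; apply/mapP/idP => [[k' + [->]]|km]; first by rewrite mem_iota.
  by exists k; rewrite ?mem_iota.
Qed.

Lemma sources_uniq m n bl : uniq (sources m n bl).
Proof.
rewrite cat_uniq map_inj_uniq ?iota_uniq; last by move=> a b [].
apply/and3P; split=> //.
  by apply/hasPn=> c /allpairsPdep [j [k [_ _ ->]]]; apply/mapP=> -[].
apply: allpairs_uniq_dep => [|j _|]; rewrite ?iota_uniq //.
by move=> [a x] [b y] _ _ [-> ->].
Qed.

Definition all_sources (p : pic) := sources (size (topw p)) (ntr p) (blab p).

Lemma mem_all_sources p c : (c \in all_sources p) = src_ok p c.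
Proof. by rewrite mem_sources; case: c => [[j|] k]. Qed.

(* [subpic] keeps the transistors of [p] in [U] and the wires between them;
   its top frame [tw] is plugged, through [src0], into sources of [p] outside
   [U], and every wire leaving [U] goes to the bottom frame, in the order of
   the sources it leaves. *)
Section Subpicture.
Variables (p : pic) (U : nat -> bool) (tw : seq S) (src0 : nat -> contact).
Hypothesis wfp : wf R p.

Definition on_U (c : contact) := if c is (Some i, _) then U i else false.

Hypothesis src0_ok : forall k, k < size tw ->
  src_ok p (src0 k) /\ src_lab p (src0 k) = onth tw k /\ ~~ on_U (src0 k).
Hypothesis src0_inj : forall k k', k < size tw -> k' < size tw -> src0 k = src0 k' -> k = k'.
Hypothesis src0_feed : forall c, src_ok p c -> on_U (wire p c) ->
  (exists k, k < size tw /\ src0 k = c) \/ (exists i k, c = (Some i, k) /\ U i).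

Definition Uidx := [seq i <- iota 0 (ntr p) | U i].
Definition Unth j := nth 0 Uidx j.

Definition lift_src (c : contact) : contact :=
  if c is (Some j, k) then (Some (Unth j), k) else src0 c.2.

Definition exits :=
  [seq c <- sources (size tw) (size Uidx) (fun j => blab p (Unth j))
     | ~~ on_U (wire p (lift_src c))].

Definition sub_wire (c : contact) : contact :=
  if wire p (lift_src c) is (Some i, k) then
    if U i then (Some (index i Uidx), k) else (None, index c exits)
  else (None, index c exits).

Definition subpic : pic :=
  Pic tw (pmap (fun c => src_lab p (lift_src c)) exits) (size Uidx)
    (fun j => tlab p (Unth j)) (fun j => blab p (Unth j)) sub_wire.

Lemma Unth_ok j : j < size Uidx -> Unth j < ntr p /\ U (Unth j).
Proof. by move=> /(mem_nth 0); rewrite mem_filter mem_iota => /andP [-> /andP [_ ->]]. Qed.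

Lemma mem_Uidx i : i < ntr p -> U i -> i \in Uidx.
Proof. by move=> ip Ui; rewrite mem_filter Ui mem_iota. Qed.

Lemma index_Uidx i : i \in Uidx -> index i Uidx < size Uidx /\ Unth (index i Uidx) = i.
Proof. by move=> iU; rewrite index_mem iU /Unth nth_index. Qed.

Lemma index_Unth j : j < size Uidx -> index (Unth j) Uidx = j.
Proof. by move=> jU; apply: index_uniq jU (filter_uniq _ (iota_uniq 0 _)). Qed.

Lemma lift_src_ok c : src_ok subpic c ->
  src_ok p (lift_src c) /\ src_lab p (lift_src c) = src_lab subpic c.
Proof.
case: c => [[j|] k] /=; last by move=> /src0_ok [? []].
by move=> /andP [jU kb]; rewrite (Unth_ok jU).1 kb.
Qed.

Lemma lift_src_inj c c' : src_ok subpic c -> src_ok subpic c' -> lift_src c = lift_src c' -> c = c'.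
Proof.
case: c => [[j|] k]; case: c' => [[j'|] k'] /=.
- by move=> /andP [jU _] /andP [j'U _] [E ->]; rewrite -(index_Unth jU) E index_Unth.
- by move=> /andP [jU _] /src0_ok [_ [_]] + E; rewrite -E /= (Unth_ok jU).2.
- by move=> /src0_ok [_ [_]] + /andP [jU _] E; rewrite E /= (Unth_ok jU).2.
- by move=> kb k'b /(src0_inj kb k'b) ->.
Qed.

Lemma mem_exits c : (c \in exits) = src_ok subpic c && ~~ on_U (wire p (lift_src c)).
Proof. by rewrite mem_filter mem_sources andbC; case: c => [[j|] k]. Qed.

Lemma exits_uniq : uniq exits.
Proof. exact/filter_uniq/sources_uniq. Qed.

Lemma sub_wire_exit c : ~~ on_U (wire p (lift_src c)) -> sub_wire c = (None, index c exits).
Proof. by rewrite /sub_wire; case: (wire p _) => [[i|] k] //= /negbTE ->. Qed.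

Lemma sub_wire_U c i k : wire p (lift_src c) = (Some i, k) -> U i ->
  sub_wire c = (Some (index i Uidx), k).
Proof. by rewrite /sub_wire => -> ->. Qed.

Lemma subpic_botw : size (botw subpic) = size exits /\
  forall m, m < size exits -> onth (botw subpic) m = src_lab p (lift_src (nth (None, 0) exits m)).
Proof.
have [|-> E] := @pmap_total _ _ (fun c => src_lab p (lift_src c)) exits.
  by move=> c; rewrite mem_exits => /andP [/lift_src_ok [/src_lab_ok]].
by split=> // m /E; apply.
Qed.

Lemma sub_wireE c : src_ok subpic c ->
  match wire subpic c with
  | (Some j, k) => j < size Uidx /\ wire p (lift_src c) = (Some (Unth j), k)
  | (None, m) => c \in exits /\ m = index c exits
  end.
Proof.
move=> c_ok; have [pc _] := lift_src_ok c_ok.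
rewrite /= /sub_wire mem_exits c_ok /=.
case E: (wire p (lift_src c)) => [[i|] k] //=.
case: ifP => //= Ui; have iU := mem_Uidx (wf_tgt_ntr wfp pc E) Ui.
by have [-> ->] := index_Uidx iU.
Qed.

Lemma subpic_tedge a b : tedge subpic a b -> tedge p (Unth a) (Unth b).
Proof.
move=> [aU [bU [k [k' [ak E]]]]].
split; first exact: (Unth_ok aU).1.
split; first exact: (Unth_ok bU).1.
exists k, k'; split; first exact: (lift_src_ok ak).1.
by have := sub_wireE ak; rewrite E => -[].
Qed.

Lemma subpic_tlt a b : tlt subpic a b -> tlt p (Unth a) (Unth b).
Proof.
elim=> [x y /subpic_tedge|x y z _ xy _ yz]; first exact: t_step.
exact: t_trans xy yz.
Qed.

Lemma subpic_wire_ok c : src_ok subpic c ->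
  tgt_ok subpic (wire subpic c) /\ tgt_lab subpic (wire subpic c) = src_lab subpic c.
Proof.
move=> c_ok; have [pc <-] := lift_src_ok c_ok; have [tgt_p lab_p] := proj1 (proj2 wfp) _ pc.
have := sub_wireE c_ok; case: (wire subpic c) => [[j|] m] /= [].
  by move=> jU E; move: tgt_p lab_p; rewrite E /= => /andP [_ ->]; rewrite jU.
move=> cx ->; have [-> E] := subpic_botw; have mx : index c exits < size exits by rewrite index_mem.
by rewrite mx E // nth_index.
Qed.

Lemma subpic_wire_inj c c' : src_ok subpic c -> src_ok subpic c' ->
  wire subpic c = wire subpic c' -> c = c'.
Proof.
move=> c_ok c'_ok; have := sub_wireE c_ok; have := sub_wireE c'_ok.
case: (wire subpic c) => [[j|] k]; case: (wire subpic c') => [[j'|] k'] //=.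
- move=> [_ E'] [_ E] [Ej Ek]; subst j' k'; rewrite -E' in E.
  apply: lift_src_inj => //; apply: (proj1 (proj2 (proj2 wfp))) E.
  + exact: (lift_src_ok c_ok).1.
  + exact: (lift_src_ok c'_ok).1.
- by move=> [c'x ->] [cx ->] [/(congr1 (nth (None, 0) exits))]; rewrite !nth_index.
Qed.

Lemma subpic_wire_onto d : tgt_ok subpic d -> exists c, src_ok subpic c /\ wire subpic c = d.
Proof.
case: d => [[j|] k] /=.
- move=> /andP [jU kb]; have [jp Uj] := Unth_ok jU.
  have tp : tgt_ok p (Some (Unth j), k) by rewrite /= jp.
  have [c [pc Ec]] := proj1 (proj2 (proj2 (proj2 wfp))) _ tp.
  have onU : on_U (wire p c) by rewrite Ec.
  have [[k0 [k0b Ek0]]|[i [k1 [Ec1 Ui]]]] := src0_feed pc onU.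
    exists (None, k0); split=> //.
    by rewrite /= (@sub_wire_U (None, k0) (Unth j) k _ Uj) ?index_Unth //= Ek0.
  subst c; have [iU Ei] := index_Uidx (mem_Uidx (proj1 (andP pc)) Ui).
  exists (Some (index i Uidx), k1); split; first by rewrite /= iU Ei; case/andP: pc.
  by rewrite /= (@sub_wire_U (Some (index i Uidx), k1) (Unth j) k _ Uj) ?index_Unth //= Ei.
- have [-> _] := subpic_botw => mx; exists (nth (None, 0) exits k).
  have := mem_nth (None, 0) mx; rewrite mem_exits => /andP [c_ok nU]; split=> //.
  by rewrite /= (sub_wire_exit nU) index_uniq // exits_uniq.
Qed.

Lemma subpic_wf : wf R subpic.
Proof.
split; first by move=> j /Unth_ok [jp _]; apply: (proj1 wfp).
split; first exact: subpic_wire_ok.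
split; first exact: subpic_wire_inj.
split; first exact: subpic_wire_onto.
by move=> j /Unth_ok [jp _] /subpic_tlt; apply: (proj2 (proj2 (proj2 (proj2 wfp)))).
Qed.

End Subpicture.

Lemma restr_exists (p : pic) (Sp : nat -> Prop) : wf R p -> down_closed p Sp ->
  exists q phi, restr_via R p Sp q phi.
Proof.
move=> wfp Sp_closed; pose U i := `[< Sp i >]; pose src0 k : contact := (None, k).
have src0_ok k : k < size (topw p) ->
  src_ok p (src0 k) /\ src_lab p (src0 k) = onth (topw p) k /\ ~~ on_U U (src0 k) by [].
have src0_inj k k' : k < size (topw p) -> k' < size (topw p) -> src0 k = src0 k' -> k = k'.
  by move=> _ _ [].
have src0_feed c : src_ok p c -> on_U U (wire p c) ->
    (exists k, k < size (topw p) /\ src0 k = c) \/ (exists i k, c = (Some i, k) /\ U i).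
  case: c => [[i|] k] c_ok; last by left; exists k.
  case E: (wire p (Some i, k)) => [[j|] k'] //= /asboolP Sj; right; exists i, k; split=> //.
  apply/asboolP/(Sp_closed i j) => //; have [ip _] := andP c_ok.
  by split=> //; split; [exact: wf_tgt_ntr wfp c_ok E | exists k, k'].
exists (subpic p U (topw p) src0), (Unth p U); split_restr.
- exact: subpic_wf.
- by [].
- by move=> j /Unth_ok [? /asboolP].
- by move=> a b aU bU E; rewrite -(index_Unth aU) E index_Unth.
- move=> i ip /asboolP Ui; exists (index i (Uidx p U)).
  exact/index_Uidx/mem_Uidx.
- by [].
- move=> c c_ok; have := sub_wireE wfp src0_ok c_ok.
  have -> : mapc (Unth p U) c = lift_src p U src0 c by case: c {c_ok} => [[j|] k].
  case: (wire _ c) => [[j|] m] [] // + _.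
  rewrite mem_exits => /andP [_ nU] i k E Si.
  by move: nU; rewrite E /= /U asboolT.
Qed.

(** * Embeddings and the order on vertices *)

Definition embeds (D0 v : pic) := exists D psi, down_closed v D /\ restr_via R v D D0 psi.

Lemma embeds_restr (p q D0 : pic) Sp phi :
  restr_via R p Sp q phi -> down_closed p Sp -> embeds D0 q -> embeds D0 p.
Proof.
move=> pq Sp_closed [D [psi [D_closed qD0]]].
exists (fun i => exists j, j < ntr q /\ phi j = i /\ D j), (fun k => phi (psi k)).
split; last exact: rv_comp pq qD0.
move=> a b ab [j [jq [Ej Dj]]]; have [ap _] := ab.
have Sb : Sp b by rewrite -Ej; exact: (rv_rng pq jq).2.
have [j' [j'q Ej']] := rv_sur pq ap (Sp_closed _ _ ab Sb).
exists j'; split=> //; split=> //; apply: (D_closed _ j) => //.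
by apply: (rv_tedge_back pq j'q jq); rewrite Ej Ej'.
Qed.

Lemma embeds_factor (p q D0 : pic) S1 phi D psi : restr_via R p S1 q phi -> down_closed p D ->
  restr_via R p D D0 psi -> (forall i, i < ntr p -> D i -> S1 i) -> embeds D0 q.
Proof.
move=> pq D_closed pD0 DS1; exists (fun j => D (phi j)), (fun k => inv_on phi (ntr q) (psi k)).
split; last exact: rv_factor pq pD0 DS1.
by move=> a b; apply: (rv_down_closed pq D_closed).
Qed.

Lemma embeds_refl (D0 : pic) : wf R D0 -> embeds D0 D0.
Proof. by move=> wfD0; exists (fun _ => True), id; split; [|exact: rv_id]. Qed.

Lemma embeds_ntr0 (D0 v : pic) : embeds D0 v -> ntr v = 0 -> ntr D0 = 0.
Proof.
move=> [D [psi [_ vD0]]] v0; case: (posnP (ntr D0)) => // /(rv_rng vD0) [].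
by rewrite v0.
Qed.

Definition through (p th : pic) (d : contact) : contact :=
  if d is (None, m) then shiftc (ntr p) (wire th (None, m)) else d.

Lemma concat_lo (p th : pic) j k : j < ntr p ->
  wire (concat p th) (Some j, k) = through p th (wire p (Some j, k)).
Proof. by rewrite /concat /= => ->. Qed.

Lemma concat_hi (p th : pic) j k : ntr p <= j ->
  wire (concat p th) (Some j, k) = shiftc (ntr p) (wire th (Some (j - ntr p), k)).
Proof. by rewrite /concat /= ltnNge => ->. Qed.

Lemma shiftc_some n d i k : shiftc n d = (Some i, k) -> n <= i.
Proof. by case: d => [[a|] b] //= [<- _]; apply: leq_addl. Qed.

Definition wire_restr (p : pic) (Sp : nat -> Prop) (q : pic) (phi : nat -> nat) c :=
  match wire q c with
  | (Some j, k) => wire p (mapc phi c) = (Some (phi j), k)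
  | (None, _) => forall i k, wire p (mapc phi c) = (Some i, k) -> ~ Sp i
  end.

(* If [D0] is the restriction of [v] to a down-closed set [D], then [v] is
   [D0] followed by [compl], the restriction of [v] to the complement of [D],
   whose top frame is the bottom frame of [D0]. *)
Section Complement.
Variables (D0 v : pic) (D : nat -> Prop) (psi : nat -> nat).
Hypotheses (wfD0 : wf R D0) (wfv : wf R v) (D_closed : down_closed v D).
Hypothesis vD0 : restr_via R v D D0 psi.
Local Notation n0 := (ntr D0).

Definition bot_src m : contact :=
  nth (None, 0) (all_sources D0) (find (fun c => wire D0 c == (None, m)) (all_sources D0)).

Lemma bot_srcP m : m < size (botw D0) -> src_ok D0 (bot_src m) /\ wire D0 (bot_src m) = (None, m).
Proof.
move=> mb; have [c [c_ok Ec]] := proj1 (proj2 (proj2 (proj2 wfD0))) (None, m) mb.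
have has_m : has (fun c => wire D0 c == (None, m)) (all_sources D0).
  by apply/hasP; exists c; rewrite ?mem_all_sources // Ec.
split; last exact/eqP/(nth_find (None, 0) has_m).
by rewrite -mem_all_sources; apply: mem_nth; rewrite -has_find.
Qed.

Lemma bot_src_uniq m c : m < size (botw D0) -> src_ok D0 c -> wire D0 c = (None, m) ->
  bot_src m = c.
Proof.
move=> mb c_ok E; have [m_ok Em] := bot_srcP mb.
by apply: (proj1 (proj2 (proj2 wfD0))) m_ok c_ok _; rewrite Em E.
Qed.

Definition outside i := ~~ `[< D i >].
Definition top_src m := mapc psi (bot_src m).
Definition compl := subpic v outside (botw D0) top_src.

Lemma exit_bot_src c0 i k : src_ok D0 c0 -> wire v (mapc psi c0) = (Some i, k) -> ~ D i ->
  exists2 m, m < size (botw D0) & bot_src m = c0.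
Proof.
move=> c0_ok E nDi; have := rv_wire vD0 c0_ok.
case E0: (wire D0 c0) => [[j|] m] W.
  by case: nDi; rewrite W in E; case: E => <- _; exact: (rv_rng vD0 (wf_tgt_ntr wfD0 c0_ok E0)).2.
have mb : m < size (botw D0) by have := wf_tgt wfD0 c0_ok; rewrite E0.
by exists m; last exact: bot_src_uniq.
Qed.

Lemma top_src_ok m : m < size (botw D0) ->
  src_ok v (top_src m) /\ src_lab v (top_src m) = onth (botw D0) m /\ ~~ on_U outside (top_src m).
Proof.
move=> mb; have [m_ok Em] := bot_srcP mb; split; first exact: (rv_src vD0 m_ok).
split; first by rewrite /top_src (rv_src_lab vD0 m_ok) -(proj2 (proj1 (proj2 wfD0) _ m_ok)) Em.
move: m_ok; rewrite /top_src; case: (bot_src m) => [[j|] k] //= /andP [jn _].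
by rewrite /outside negbK; apply/asboolP; exact: (rv_rng vD0 jn).2.
Qed.

Lemma top_src_inj m m' : m < size (botw D0) -> m' < size (botw D0) ->
  top_src m = top_src m' -> m = m'.
Proof.
move=> mb m'b E; have [m_ok Em] := bot_srcP mb; have [m'_ok Em'] := bot_srcP m'b.
suff E0 : bot_src m = bot_src m' by move: Em; rewrite E0 Em' => -[].
move: E; rewrite /top_src.
case: (bot_src m) m_ok => [[j|] k]; case: (bot_src m') m'_ok => [[j'|] k'] //=.
by move=> /andP [j'n _] /andP [jn _] [/(rv_inj vD0 jn j'n) -> ->].
Qed.

Lemma top_src_feed c : src_ok v c -> on_U outside (wire v c) ->
  (exists k, k < size (botw D0) /\ top_src k = c) \/ (exists i k, c = (Some i, k) /\ outside i).
Proof.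
move=> c_ok; case E: (wire v c) => [[i|] k] //= /asboolPn nDi.
case: c c_ok E => [[i'|] k'] c_ok E; last first.
  have c0_ok : src_ok D0 (None, k') by move: c_ok; rewrite /= (rv_top vD0).
  have [m mb Em] := exit_bot_src c0_ok E nDi.
  by left; exists m; rewrite /top_src Em.
have [Di'|nDi'] := EM (D i'); last by right; exists i', k'; split=> //; exact/asboolPn.
have [ip kb] := andP c_ok; have [j [jn Ej]] := rv_sur vD0 ip Di'.
have c0_ok : src_ok D0 (Some j, k') by rewrite /= jn (rv_lab vD0 jn).2 Ej.
have E0 : wire v (mapc psi (Some j, k')) = (Some i, k) by rewrite /= Ej.
have [m mb Em] := exit_bot_src c0_ok E0 nDi.
by left; exists m; rewrite /top_src Em /= Ej.
Qed.

Lemma compl_wf : wf R compl.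
Proof. exact: subpic_wf wfv top_src_ok top_src_inj top_src_feed. Qed.

Local Notation nc := (size (Uidx v outside)).

Definition glue i := if `[< D i >] then inv_on psi n0 i else index i (Uidx v outside) + n0.

Lemma glue_psi j : j < n0 -> glue (psi j) = j.
Proof.
move=> jn; have [_ Dj] := rv_rng vD0 jn.
by rewrite /glue asboolT // (rv_invK vD0 jn).
Qed.

Lemma glue_Unth j : j < nc -> glue (Unth v outside j) = j + n0.
Proof.
move=> /[dup] jU /Unth_ok [_ /asboolPn nD].
by rewrite /glue asboolF // index_Unth.
Qed.

Lemma compl_wire c c' : src_ok compl c' -> lift_src v outside top_src c' = c ->
  (forall j k, wire v c = (Some j, k) -> ~ D j) ->
  match wire v c with
  | (Some j, k) => shiftc n0 (wire compl c') = (Some (glue j), k)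
  | (None, _) => forall i k, shiftc n0 (wire compl c') = (Some i, k) -> False
  end.
Proof.
move=> c'_ok <- nD; have := sub_wireE wfv top_src_ok c'_ok.
case: (wire compl c') => [[j'|] k'] /=.
  by move=> [j'U ->]; rewrite glue_Unth.
rewrite mem_exits => -[/andP [_ nU] _].
case E: (wire v _) nU nD => [[j|] k] /=; last by move=> _ _ ? ? [].
by rewrite /outside negbK => /asboolP Dj /(_ _ _ erefl).
Qed.

Definition unglue i := if i < n0 then psi i else Unth v outside (i - n0).

Lemma glueK j : j < ntr v -> glue j < n0 + nc /\ unglue (glue j) = j.
Proof.
move=> jv; rewrite /glue /unglue; case: (asboolP (D j)) => [Dj|nDj].
  by have [lt ->] := rv_inv vD0 jv Dj; rewrite lt ltn_addr.
have oj : outside j by exact/asboolPn.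
have [jU Ej] := index_Uidx (mem_Uidx jv oj).
have -> : (index j (Uidx v outside) + n0 < n0) = false by rewrite ltnNge leq_addl.
by rewrite addnK Ej addnC ltn_add2l.
Qed.

Lemma unglueK i : i < n0 + nc -> unglue i < ntr v /\ glue (unglue i) = i.
Proof.
move=> i_lt; rewrite /unglue; case: (ltnP i n0) => [i_n0|i_n0].
  by rewrite glue_psi //; split=> //; exact: (rv_rng vD0 i_n0).1.
have iU : i - n0 < nc by rewrite ltn_subLR.
by rewrite glue_Unth // subnK //; split=> //; exact: (Unth_ok iU).1.
Qed.

Lemma concat_compl_lab i :
  tlab (concat D0 compl) i = tlab v (unglue i) /\ blab (concat D0 compl) i = blab v (unglue i).
Proof. by rewrite /unglue /=; case: (ltnP i n0) => // i_n0; exact: (rv_lab vD0 i_n0). Qed.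

Lemma glue_wire_D0 c0 : src_ok D0 c0 ->
  wire_restr (concat D0 compl) (fun _ => True) v glue (mapc psi c0).
Proof.
move=> c0_ok; have [c0_glue c0_concat] :
    mapc glue (mapc psi c0) = c0 /\ wire (concat D0 compl) c0 = through D0 compl (wire D0 c0).
  case: c0 c0_ok => [[j|] k] // /andP [jn _].
  by split; [rewrite /= glue_psi | rewrite concat_lo].
rewrite /wire_restr c0_glue c0_concat; have := rv_wire vD0 c0_ok.
case E0: (wire D0 c0) => [[j|] m] W; first by rewrite W /= glue_psi // (wf_tgt_ntr wfD0 c0_ok E0).
have mb : m < size (botw D0) by have := wf_tgt wfD0 c0_ok; rewrite E0.
have lift_m : lift_src v outside top_src (None, m) = mapc psi c0.
  by rewrite /= /top_src (bot_src_uniq mb c0_ok E0).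
have m_ok : src_ok compl (None, m) by [].
have := compl_wire m_ok lift_m W.
by case: (wire v _) => [[j|] k] H // ? ? /H.
Qed.

Lemma glue_wire_outside i k : src_ok v (Some i, k) -> ~ D i ->
  wire_restr (concat D0 compl) (fun _ => True) v glue (Some i, k).
Proof.
move=> c_ok nDi; have [ip kb] := andP c_ok.
have oi : outside i by exact/asboolPn.
have [iU Ei] := index_Uidx (mem_Uidx ip oi).
have c'_ok : src_ok compl (Some (index i (Uidx v outside)), k) by rewrite /= iU Ei.
have lift_c' : lift_src v outside top_src (Some (index i (Uidx v outside)), k) = (Some i, k).
  by rewrite /= Ei.
have nD j k' : wire v (Some i, k) = (Some j, k') -> ~ D j.
  move=> E Dj; have ij : tedge v i j.
    by split=> //; split; [exact: wf_tgt_ntr wfv c_ok E | exists k, k'].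
  exact: nDi (D_closed ij Dj).
have := compl_wire c'_ok lift_c' nD.
rewrite /wire_restr [mapc _ _]/=.
have -> : glue i = index i (Uidx v outside) + n0 by rewrite /glue asboolF.
rewrite concat_hi ?leq_addl // addnK.
by case: (wire v _) => [[j|] k'] H // ? ? /H.
Qed.

Lemma glue_wire c : src_ok v c -> wire_restr (concat D0 compl) (fun _ => True) v glue c.
Proof.
case: c => [[i|] k] c_ok; last first.
  by apply: (glue_wire_D0 (c0 := (None, k))); move: c_ok; rewrite /= (rv_top vD0).
have [Di|nDi] := EM (D i); last exact: glue_wire_outside.
have [ip kb] := andP c_ok; have [jn Ej] := rv_inv vD0 ip Di.
rewrite -Ej; apply: (glue_wire_D0 (c0 := (Some _, k))).
by rewrite /= jn (rv_lab vD0 jn).2 Ej.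
Qed.

Lemma concat_compl_restr : restr_via R (concat D0 compl) (fun _ => True) v glue.
Proof.
split_restr.
- exact: wfv.
- by rewrite (rv_top vD0).
- by move=> j /glueK [].
- by move=> a b av bv E; rewrite -(glueK av).2 E (glueK bv).2.
- by move=> i i_lt _; exists (unglue i); exact: unglueK.
- by move=> j /glueK [_ E]; rewrite (concat_compl_lab (glue j)).1 (concat_compl_lab (glue j)).2 E.
- exact: glue_wire.
Qed.

End Complement.

Lemma embeds_le (D0 v : pic) : wf R D0 -> wf R v -> embeds D0 v -> le_v R D0 v.
Proof.
move=> wfD0 wfv [D [psi [D_closed vD0]]].
exists (compl D0 v D psi); split; first exact: compl_wf.
by split=> //; exists (glue D0 v D psi); exact: concat_compl_restr.
Qed.

Section Head.
Variables (D0 th v : pic) (chi : nat -> nat).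
Hypotheses (wfD0 : wf R D0) (vP : restr_via R (concat D0 th) (fun _ => True) v chi).
Local Notation n0 := (ntr D0).
Local Notation chi' := (inv_on chi (ntr v)).

Lemma head_inv j : j < n0 -> chi' j < ntr v /\ chi (chi' j) = j.
Proof. by move=> jn; apply: (rv_inv vP) => //=; rewrite ltn_addr. Qed.

Lemma head_down_closed : down_closed v (fun i => chi i < n0).
Proof.
move=> a b [av [bv [k [k' [a_ok E]]]]] b_lt; have := rv_wire vP a_ok; rewrite E [mapc _ _]/=.
case: (ltnP (chi a) n0) => // a_ge; rewrite concat_hi // => /shiftc_some.
by rewrite leqNgt b_lt.
Qed.

Lemma head_wire c : src_ok D0 c ->
  src_ok v (mapc chi' c) /\ mapc chi (mapc chi' c) = c /\
  wire (concat D0 th) c = through D0 th (wire D0 c).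
Proof.
case: c => [[j|] k] c_ok; last by move: c_ok; rewrite /= (rv_top vP).
have [jn kb] := andP c_ok; have [j'v Ej'] := head_inv jn.
rewrite concat_lo //= j'v Ej' (rv_lab vP j'v).2 Ej'.
by rewrite /= jn kb.
Qed.

Lemma head_restr : restr_via R v (fun i => chi i < n0) D0 chi'.
Proof.
split_restr.
- exact: wfD0.
- by rewrite (rv_top vP).
- by move=> j jn; have [? ->] := head_inv jn.
- by move=> a b an bn E; rewrite -(head_inv an).2 E (head_inv bn).2.
- by move=> i iv chi_lt; exists (chi i); split=> //; exact: (rv_invK vP).
- move=> j jn; have [j'v Ej'] := head_inv jn; have [-> ->] := rv_lab vP j'v.
  by rewrite Ej' /= jn.
- move=> c c_ok; have [c'_ok [Ec' EP]] := head_wire c_ok.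
  have := rv_wire vP c'_ok; rewrite Ec' EP.
  case E0: (wire D0 c) => [[j|] k] /=.
  + case Ev: (wire v _) => [[j'|] k'] W; last by case: (W _ _ erefl).
    by case: W => -> ->; rewrite (rv_invK vP (wf_tgt_ntr (rv_wf vP) c'_ok Ev)).
  + move=> W i k' Ev; move: W; rewrite Ev => /shiftc_some.
    by rewrite leqNgt => /negP.
Qed.

End Head.

Lemma le_embeds (D0 v : pic) : wf R D0 -> le_v R D0 v -> embeds D0 v.
Proof.
move=> wfD0 [th [_ [_ [chi vP]]]].
exists (fun i => chi i < ntr D0), (inv_on chi (ntr v)).
by split; [apply: head_down_closed vP | exact: (head_restr wfD0 vP)].
Qed.

Lemma le_v_embeds (D0 v : pic) : wf R D0 -> wf R v -> le_v R D0 v <-> embeds D0 v.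
Proof. by move=> wfD0 wfv; split; [exact: le_embeds | exact: embeds_le]. Qed.

(** * Hyperplanes and half-spaces *)

Lemma rv_vertex (w : seq S) (p q : pic) Sp phi :
  restr_via R p Sp q phi -> is_vertex R w p -> is_vertex R w q.
Proof.
move=> pq [_ [top_p red_p]].
by split; [exact: rv_wf pq | split; [rewrite (rv_top pq) | exact: rv_reduced pq red_p]].
Qed.

Lemma rv_edge (w : seq S) (p q : pic) Sp phi t :
  restr_via R p Sp q phi -> is_vertex R w p -> t < ntr q -> maximal p (phi t) ->
  is_edge R w (q, t).
Proof.
move=> pq vp tq tmax.
by split; [exact: rv_vertex pq vp | exact: (rv_maximal pq tq tmax)].
Qed.

Lemma is_min_restr (w : seq S) (e : medge S) (Dl : pic) : is_edge R w e -> is_min R e Dl ->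
  exists phi0 t0, restr_via R e.1 (fun i => tle e.1 i e.2) Dl phi0 /\ t0 < ntr Dl /\ phi0 t0 = e.2.
Proof.
move=> [_ [e2n _]] [phi eDl]; exists phi.
by have [t [tn Et]] := rv_sur eDl e2n (or_introl erefl); exists t.
Qed.

(* [Dl] is min(H) for the hyperplane H dual to [e], with the white
   transistor [e.2] of [e] corresponding to [t0].  An edge [f] lies in H
   exactly when [min_at f]: the transistors below its white one form a copy
   of [Dl], white transistor at [t0]. *)
Section Hyperplane.
Variables (w : seq S) (e : medge S) (Dl : pic) (phi0 : nat -> nat) (t0 : nat).
Hypotheses (He : is_edge R w e) (eDl : restr_via R e.1 (fun i => tle e.1 i e.2) Dl phi0).
Hypotheses (t0_lt : t0 < ntr Dl) (phi0_t0 : phi0 t0 = e.2).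
Local Notation H := (hyperplane R w e).

Definition min_at (f : medge S) := exists psi,
  restr_via R f.1 (fun i => tle f.1 i f.2) Dl psi /\ psi t0 = f.2.

Lemma min_at_restr (p q : pic) Sp phi t : wf R p -> restr_via R p Sp q phi -> down_closed p Sp ->
  (forall i, i < ntr p -> tle p i (phi t) -> Sp i) -> t < ntr q ->
  min_at (p, phi t) <-> min_at (q, t).
Proof.
move=> wfp pq Sp_closed below_Sp tq; split=> -[psi [pDl Epsi]].
- exists (fun k => inv_on phi (ntr q) (psi k)); split; last by rewrite /= Epsi (rv_invK pq tq).
  apply: rv_ext (rv_wf pq) _ (rv_factor pq pDl below_Sp) => j jq.
  by split; [exact: (rv_tle_back pq Sp_closed jq tq) | exact: (rv_tle pq)].
- exists (fun k => phi (psi k)); split; last by rewrite /= Epsi.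
  apply: rv_ext wfp _ (rv_comp pq pDl) => i ip; split.
    by move=> [j [jq [<- jt]]]; exact: (rv_tle pq).
  move=> it; have [j [jq Ej]] := rv_sur pq ip (below_Sp _ ip it).
  by exists j; split=> //; split=> //; apply: (rv_tle_back pq) => //; rewrite Ej.
Qed.

Lemma hrel_min_at f f' : hrel R w f f' -> (min_at f <-> min_at f').
Proof.
case: f f' => [p t] [q t'].
move=> [[[wfp _] _] [[_ [t'q _]] [[phi [pq /= <-]]|[t2 [t2max [t2_ne [phi [pq /= Et]]]]]]]].
  exact: min_at_restr pq _ _ t'q.
rewrite -Et; apply: min_at_restr pq (maximal_down_closed t2max) _ t'q => //.
move=> i ip [->|it] Ei; first by apply: t2_ne; rewrite -Ei.
by subst; apply: maximal_tlt t2max it.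
Qed.

Lemma hyperplane_min_at f : H f -> min_at f.
Proof.
move=> [_ ef].
have min_iff x y : clos_refl_sym_trans _ (hrel R w) x y -> (min_at x <-> min_at y).
  elim=> [a b /hrel_min_at //|a //|a b _ IH|a b c _ IH1 _ IH2].
  - exact: iff_sym IH.
  - exact: iff_trans IH1 IH2.
by apply/(min_iff _ _ ef); exists phi0.
Qed.

Lemma tle_t0 j : j < ntr Dl -> tle Dl j t0.
Proof.
move=> jn; apply: (rv_tle_back eDl) => //; first exact: tle_down_closed.
by rewrite phi0_t0; exact: (rv_rng eDl jn).2.
Qed.

Lemma maximal_t0 j : j < ntr Dl -> maximal Dl j -> j = t0.
Proof. by move=> jn jmax; case: (tle_t0 jn) => // /(maximal_tlt jmax). Qed.

Lemma Dl_edge : is_edge R w (Dl, t0).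
Proof. by apply: (rv_edge eDl) => //; [case: He | rewrite phi0_t0; case: He]. Qed.

Lemma min_at_top_edge f : is_edge R w f -> min_at f ->
  (forall i, i < ntr f.1 -> tle f.1 i f.2) -> hrel R w f (Dl, t0).
Proof.
move=> f_edge [psi [fDl Epsi]] all_below; split=> //; split; first exact: Dl_edge.
left; exists psi; split=> //.
by apply: rv_ext fDl => [|i /all_below]; [case: f_edge => -[] | split].
Qed.

(* Deleting, one at a time, maximal transistors not below the white one
   walks along opposite sides of squares inside the hyperplane. *)
Lemma min_at_connected f : is_edge R w f -> min_at f ->
  clos_refl_sym_trans (medge S) (hrel R w) f (Dl, t0).
Proof.
move En: (ntr f.1) => n; elim/ltn_ind: n f En => n IH f En f_edge f_min.
have [all_below|] := EM (forall i, i < ntr f.1 -> tle f.1 i f.2).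
  exact/rst_step/min_at_top_edge.
move=> /existsNP [i /not_implyP [ip i_nle]]; have [[wff _] [f2n _]] := f_edge.
have [t2 [t2max t2_nle]] := exists_maximal (Q := fun i => ~ tle f.1 i f.2) wff
  (fun a b ab a_nle b_le => a_nle (tle_down_closed ab b_le)) ip i_nle.
have t2_ne : t2 <> f.2 by move=> E; apply: t2_nle; left.
have [q [phi fq]] := restr_exists wff (maximal_down_closed t2max).
have [t'q Et'] := rv_inv fq f2n (fun E => t2_ne (esym E)).
set t' := inv_on phi (ntr q) f.2 in t'q Et'.
have q_edge : is_edge R w (q, t').
  by apply: (rv_edge fq) => //; [case: f_edge | rewrite Et'; case: f_edge].
have f_q : hrel R w f (q, t').
  by split=> //; split=> //; right; exists t2; split=> //; split=> //; exists phi.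
have q_lt : ntr q < n by rewrite -En (rv_ntr_lt fq (proj1 t2max)).
apply: rst_trans (rst_step _ _ _ _ f_q) (IH _ q_lt (q, t') erefl q_edge _).
exact/(hrel_min_at f_q).
Qed.

Lemma min_at_hyperplane f : is_edge R w f -> min_at f -> H f.
Proof.
move=> f_edge f_min; split=> //.
have e_min : min_at e by exists phi0.
exact: rst_trans (min_at_connected He e_min) (rst_sym _ _ _ _ (min_at_connected f_edge f_min)).
Qed.

Lemma embeds_min_at f D psi : is_edge R w f -> down_closed f.1 D -> restr_via R f.1 D Dl psi ->
  D f.2 -> min_at f.
Proof.
move=> [[wff _] f2max] D_closed fDl Df2.
have [j [jn Ej]] := rv_sur fDl (proj1 f2max) Df2.
have jmax : maximal Dl j by apply: (rv_maximal fDl) => //; rewrite Ej.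
move: Ej; rewrite (maximal_t0 jn jmax) => Et0; exists psi; split=> //.
apply: (rv_ext wff _ fDl) => i ip; split.
- move=> Di; have [j' [j'n <-]] := rv_sur fDl ip Di.
  by rewrite -Et0; apply: (rv_tle fDl); exact: tle_t0.
- by case=> [->|it] //; exact: down_closed_tlt D_closed it Df2.
Qed.

Lemma adj_avoid_embeds x y : adj_avoid R w H x y -> embeds Dl y -> embeds Dl x.
Proof.
move=> [_ [_ [E [E_edge [E_notH [[[phx Ex] [phy Ey]]|[[phy Ey] [phx Ex]]]]]]]] y_emb.
  have [D [psi [D_closed EDl]]] := embeds_restr Ey (maximal_down_closed (proj2 E_edge)) y_emb.
  exact: embeds_factor Ex D_closed EDl _.
have [D [psi [D_closed EDl]]] : embeds Dl E.1 by apply: (embeds_restr Ey).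
have [DE|nDE] := EM (D E.2).
  by case: E_notH; apply: min_at_hyperplane => //; exact: embeds_min_at E_edge D_closed EDl DE.
by apply: (embeds_factor Ex D_closed EDl) => i ip Di Ei; apply: nDE; rewrite -Ei.
Qed.

Lemma embeds_pos_half v : is_vertex R w v -> embeds Dl v -> pos_half R w H v.
Proof.
move=> v_vx v_emb; split=> // -[s [[_ [_ s0]] sv]].
suff /embeds_ntr0 /(_ s0) : embeds Dl s by move: t0_lt => /[swap] ->.
elim: sv v_emb {v_vx} => [a b /adj_avoid_embeds //|a //|a b c _ IH1 _ IH2 /IH2 /IH1 //].
Qed.

(* Vertices without a copy of [Dl] reach * by deleting maximal transistors,
   and none of these steps crosses H. *)
Lemma not_embeds_neg_half v : is_vertex R w v -> ~ embeds Dl v -> neg_half R w H v.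
Proof.
move En: (ntr v) => n; elim/ltn_ind: n v En => n IH v En v_vx v_nemb.
have [v0|v_pos] := posnP (ntr v).
  by exists v; split; [case: v_vx => ? [? _] | exact: rt_refl].
have [wfv _] := v_vx.
have [T [Tmax _]] := exists_maximal (Q := fun _ => True) wfv (fun _ _ _ _ => I) v_pos I.
have [q [phi vq]] := restr_exists wfv (maximal_down_closed Tmax).
have q_nemb : ~ embeds Dl q by move=> /(embeds_restr vq (maximal_down_closed Tmax)).
have q_lt : ntr q < n by rewrite -En (rv_ntr_lt vq (proj1 Tmax)).
have [s [s_star sq]] := IH _ q_lt q erefl (rv_vertex vq v_vx) q_nemb.
exists s; split=> //; apply: rt_trans sq (rt_step _ _ _ _ _).
split; first exact: rv_vertex vq v_vx.
split=> //; exists (v, T); split; first by split.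
split; last by right; split; [exists id; exact: rv_id | exists phi].
move=> /hyperplane_min_at [psi [vDl _]]; apply: v_nemb.
by exists (fun i => tle v i T), psi; split=> //; exact: tle_down_closed.
Qed.

Lemma pos_halfP v : pos_half R w H v <-> is_vertex R w v /\ embeds Dl v.
Proof.
split=> [[v_vx v_npos]|[v_vx v_emb]]; last exact: embeds_pos_half.
split=> //; apply: contrapT => v_nemb; exact/v_npos/not_embeds_neg_half.
Qed.

End Hyperplane.

End Pictures.

Theorem proposition4p3 (S : Type) (R : seq S -> seq S -> Prop) (w : seq S)
  (HRneq : forall u v, R u v -> u <> v)
  (HRne : forall u v, R u v -> u <> [::] /\ v <> [::])
  (Hw : w <> [::])
  (e1 e2 : medge S) (He1 : is_edge R w e1) (He2 : is_edge R w e2)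
  (D1 D2 : picture S) (HD1 : is_min R e1 D1) (HD2 : is_min R e2 D2) :
  ((forall v, pos_half R w (hyperplane R w e1) v ->
              pos_half R w (hyperplane R w e2) v) <-> le_v R D2 D1) /\
  ((exists v, pos_half R w (hyperplane R w e1) v /\
              pos_half R w (hyperplane R w e2) v) <->
   (exists v, is_vertex R w v /\ le_v R D1 v /\ le_v R D2 v)).
Proof.
have [phi1 [t1 [eD1 [t1_lt Et1]]]] := is_min_restr He1 HD1.
have [phi2 [t2 [eD2 [t2_lt Et2]]]] := is_min_restr He2 HD2.
have pos1 := pos_halfP He1 eD1 t1_lt Et1; have pos2 := pos_halfP He2 eD2 t2_lt Et2.
have [D1_vx _] := Dl_edge He1 eD1 t1_lt Et1; have [D2_vx _] := Dl_edge He2 eD2 t2_lt Et2.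
have [[wfD1 _] [wfD2 _]] := (D1_vx, D2_vx).
split; split.
- move=> sub; have /pos2 [_ emb21] := sub D1 (proj2 (pos1 D1) (conj D1_vx (embeds_refl wfD1))).
  exact/le_v_embeds.
- move=> le21 v /pos1 [v_vx [D [psi [D_closed vD1]]]]; apply/pos2; split=> //.
  exact: embeds_restr vD1 D_closed (le_embeds wfD2 le21).
- move=> [v [/pos1 [v_vx emb1] /pos2 [_ emb2]]]; have [wfv _] := v_vx.
  by exists v; split=> //; split; apply/le_v_embeds.
- move=> [v [v_vx [le1 le2]]]; exists v.
  by split; [apply/pos1 | apply/pos2]; split=> //; exact: le_embeds.
Qed.
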